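(* Let $\mathscr E$ be a closed totally disconnected subset of $\mathbb S^2$, and let $\mathscr I$ be the set of all isolated points of $\mathscr E$. Assume $\mathscr I$ is infinite. If $\mathscr F$ is a finite subset of $\mathbb S^2\setminus\mathscr E$, then $\mathscr E\cup\mathscr F$ is homeomorphic to $\mathscr E$. *)

From HB Require Import structures.
From mathcomp Require Import all_boot all_order all_algebra.
From mathcomp Require Import all_classical all_reals all_analysis.
Set Implicit Arguments. Unset Strict Implicit. Unset Printing Implicit Defensive.
Import Order.TTheory GRing.Theory Num.Theory.
Import numFieldTopology.Exports numFieldNormedType.Exports.
Local Open Scope classical_set_scope.
Local Open Scope ring_scope.

(* The unit sphere S^2 in R^3 (Euclidean norm), as a subset of 'M[R]_(1, 3)
   equipped with its usual (product) topology. *)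
Definition sphere2 (R : realType) : set 'M[R]_(1, 3) :=
  [set v | \sum_(i < 3) (v ord0 i) ^+ 2 = 1].

Arguments sphere2 R : clear implicits.

Definition homeomorphic_sets (T U : topologicalType) (A : set T) (B : set U) :=
  exists (f : T -> U) (g : U -> T),
    [/\ (forall x, A x -> B (f x)),
        (forall y, B y -> A (g y)),
        (forall x, A x -> g (f x) = x),
        (forall y, B y -> f (g y) = y) &
        ({within A, continuous f} /\ {within B, continuous g})].

From HB Require Import structures.
From mathcomp Require Import all_boot all_order all_algebra.
From mathcomp Require Import all_classical all_reals all_analysis.
From mathcomp Require Import lra.
Set Implicit Arguments. Unset Strict Implicit. Unset Printing Implicit Defensive.
Import Order.TTheory GRing.Theory Num.Theory.
Import numFieldTopology.Exports numFieldNormedType.Exports.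
Local Open Scope classical_set_scope.
Local Open Scope ring_scope.

(* Since E is compact and has infinitely many isolated points, some sequence
   x_0, x_1, ... of distinct isolated points of E converges.  List F as
   c_0, ..., c_(k-1) and let y be the sequence c_0, ..., c_(k-1), x_0, x_1, ...
   The map sending y_n to y_(n+k) and fixing every other point is a bijection
   from E `|` F onto E, with inverse y_n |-> y_(n-k).  Both maps are continuous:
   at the points y_n because these are isolated, and at any other point z
   because the only moved points near z are y_n of large index, which lie
   close to the limit of y together with their images. *)

Section isolated_points.
Context {T : topologicalType}.
Implicit Types (A B : set T) (x : T).

Lemma isolatedP A x : isolated A x <-> A x /\ \forall z \near x, A z -> z = x.
Proof.
split=> [[/set_mem Ax [U xU UA]]|[Ax xA]].
  split=> //; apply: filterS xU => z Uz Az.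
  by have : (U `&` A) z by []; rewrite UA.
split; first exact/mem_set.
exists [set z | A z -> z = x] => //.
by apply/seteqP; split=> [z [+ Az] | z ->]; [exact | split].
Qed.

Lemma closed_nbhsC B x : closed B -> ~ B x -> \forall z \near x, ~ B z.
Proof. by move=> cB Bx; apply: open_nbhs_nbhs; split=> //; exact: closed_openC. Qed.

Lemma isolated_setU A B x : isolated A x -> closed B -> ~ B x ->
  isolated (A `|` B) x.
Proof.
move=> /isolatedP[Ax xA] cB Bx; apply/isolatedP; split; first by left.
by apply: filterS2 xA (closed_nbhsC cB Bx) => z zA zB [/zA|].
Qed.

Lemma isolated_setD A B x : isolated A x -> ~ B x -> isolated (A `\` B) x.
Proof.
move=> /isolatedP[Ax xA] Bx; apply/isolatedP; split=> //.
by apply: filterS xA => z zA [/zA].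
Qed.

Lemma finite_set_closed A : hausdorff_space T -> finite_set A -> closed A.
Proof. by move=> /hausdorff_accessible/accessible_finite_set_closed; apply. Qed.

Lemma finite_set_isolated A x : hausdorff_space T -> finite_set A -> A x ->
  isolated A x.
Proof.
move=> hT fA Ax; apply/isolatedP; split=> //.
have cAx : closed (A `\ x) by apply: finite_set_closed => //; exact: finite_setD.
apply: filterS (closed_nbhsC cAx (fun Ax' => Ax'.2 erefl)) => z nAz Az.
by apply: contrapT => zx; apply: nAz.
Qed.

End isolated_points.

Lemma compact_infinite_limit_point {T : ptopologicalType} (K B : set T) :
  compact K -> B `<=` K -> infinite_set B -> exists p, limit_point B p.
Proof.
move=> cK BK infB; apply: contrapT => /forallNP nlim.
have nU x : {U | nbhs x U & B `&` U `<=` [set x]}.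
  by apply: cid2; rewrite -not_limit_pointE.
move: cK; rewrite compact_cover => /(_ T K (fun x => (s2val (nU x))°)).
case=> [x _|x Kx|D _ KD]; first exact: open_interior.
- by exists x => //; case: (nU x).
apply: infB; apply: sub_finite_set (finite_fset D) => b Bb.
have [x Dx] := KD b (BK b Bb); case: (nU x) => U _ BU /= /interior_subset Ub.
by rewrite (BU b (conj Bb Ub)).
Qed.

Lemma limit_point_injective_cvg {R : archiRealFieldType} {V : normedModType R}
    (A : set V) (p : V) :
  limit_point A p ->
  exists x : nat -> V, [/\ injective x, forall n, A (x n) & x @ \oo --> p].
Proof.
move=> Ap.
have /choice[pick pickP] : forall r : R,
    exists z, 0 < r -> [/\ A z, z != p & `|p - z| < r].
  move=> r; have [r0|r0] := pselect (0 < r); last by exists p.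
  have [z [zp Az pz]] := Ap _ (nbhsx_ballx p r r0).
  by exists z => _; split=> //; move: pz; rewrite -ball_normE.
(* Each term is closer to p than the previous one, hence the terms are distinct. *)
pose x := fix x n :=
  pick (if n is m.+1 then Num.min `|p - x m| m.+2%:R^-1 else 1).
have xP n : [/\ A (x n), x n != p & `|p - x n| < n.+1%:R^-1].
  elim: n => [|n [_ xnp _]]; first by rewrite invr1; exact: pickP.
  have [] := pickP (Num.min `|p - x n| n.+2%:R^-1).
    by rewrite lt_min normr_gt0 subr_eq0 eq_sym xnp invr_gt0 ltr0n.
  move=> Axn xnp' /lt_le_trans xn; split=> //; apply: xn.
  by rewrite ge_min lexx orbT.
have xdecr n : `|p - x n.+1| < `|p - x n|.
  have [_ xnp _] := xP n; have [] := pickP (Num.min `|p - x n| n.+2%:R^-1).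
    by rewrite lt_min normr_gt0 subr_eq0 eq_sym xnp invr_gt0 ltr0n.
  by move=> _ _ /lt_le_trans; apply; rewrite ge_min lexx.
have xmono : {homo (fun n => `|p - x n|) : m n / (m < n)%N >-> n < m}.
  apply: (@homo_ltn _ _ (fun a b => b < a)) => // a b c ba cb.
  exact: lt_trans cb ba.
exists x; split.
- by move=> m n xmn; case: (ltngtP m n) => // /xmono; rewrite xmn ltxx.
- by move=> n; have [] := xP n.
- apply/cvgrPdist_lt => e e0; near=> n.
  have [_ _ xn] := xP n; apply: lt_trans xn _; near: n.
  exact: (near_infty_natSinv_lt (PosNum e0)).
Unshelve. all: by end_near.
Qed.

Definition reindex {T : Type} (y : nat -> T) (s : nat -> nat) (z : T) : T :=
  if pselect (range y z) is left yz then y (s (s2val (cid2 yz))) else z.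

Lemma reindex_at {T : Type} (y : nat -> T) s n :
  injective y -> reindex y s (y n) = y (s n).
Proof.
rewrite /reindex => yI; case: pselect => [yz|[]]; last exact: imageT.
by case: (cid2 yz) => m _ ymn /=; rewrite (yI _ _ ymn).
Qed.

Lemma reindex_out {T : Type} (y : nat -> T) s z :
  ~ range y z -> reindex y s z = z.
Proof. by rewrite /reindex; case: pselect. Qed.

Section reindex_continuity.
Context {R : realFieldType} {V : normedModType R}.
Variables (y : nat -> V) (p : V) (s : nat -> nat) (k : nat).
Hypotheses (yI : injective y) (y_cvg : y @ \oo --> p).
Hypothesis s_ge : forall n, (n <= s n + k)%N.

Lemma reindex_continuous_out z : ~ range y z -> {for z, continuous (reindex y s)}.
Proof.
move=> yz; apply/cvgrPdist_lt => e e0; rewrite (reindex_out _ yz).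
have e3 : 0 < e / 3 by rewrite divr_gt0.
have [N _ yN] := (cvgrPdist_lt _ _).1 y_cvg _ e3.
have zN : ~ (y @` `I_(N + k)) z by move=> [n _ yn]; apply: yz; exists n.
near=> w.
have zw : `|z - w| < e / 3 by near: w; exact: (fcvgrPdist_lt _).1 cvg_id _ e3.
have wN : ~ (y @` `I_(N + k)) w.
  near: w; apply: closed_nbhsC zN.
  apply: finite_set_closed; first exact: norm_hausdorff.
  exact/finite_image/finite_II.
have [[n _ ynw]|wy] := pselect (range y w); last by rewrite reindex_out //; lra.
have Nn : (N + k <= n)%N by rewrite leqNgt; apply/negP => nNk; apply: wN; exists n.
rewrite -ynw reindex_at // in zw *.
have yn := yN n (leq_trans (leq_addr k N) Nn).
have ysn : `|p - y (s n)| < e / 3.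
  by apply: yN; rewrite /= -(leq_add2r k); apply: leq_trans Nn (s_ge n).
have := ler_distD (y n) z (y (s n)); have := ler_distD p (y n) (y (s n)).
rewrite (distrC (y n) p); lra.
Unshelve. all: by end_near.
Qed.

Lemma reindex_continuous (D : set V) : D `&` range y `<=` isolated D ->
  {within D, continuous (reindex y s)}.
Proof.
move=> Diso; apply/subspace_continuousP => z Dz.
have [yz|yz] := pselect (range y z); last first.
  by apply: cvg_within_filter; exact: reindex_continuous_out.
have /isolatedP[_ zD] := Diso z (conj Dz yz).
by apply: cvg_near_cst; apply: filterS zD => w wz Dw; rewrite wz.
Qed.

End reindex_continuity.

Lemma homeomorphic_setD_prefix {R : realFieldType} {V : normedModType R}
    (D : set V) (y : nat -> V) (p : V) k :
  injective y -> y @ \oo --> p -> range y `<=` isolated D ->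
  homeomorphic_sets D (D `\` y @` `I_k).
Proof.
move=> yI y_cvg yD.
have Dy n : D (y n) := isolatedS (yD _ (imageT y n)).
have prefix n : (y @` `I_k) (y n) = (n < k)%N.
  by apply/propext; split=> [[m mk /yI <-]//|nk]; exists n.
exists (reindex y (addn^~ k)), (reindex y (subn^~ k)); split.
- move=> z Dz; have [[n _ <-]|yz] := pselect (range y z).
    rewrite reindex_at //; split; first exact: Dy.
    by rewrite prefix ltnNge leq_addl.
  by rewrite reindex_out //; split=> // -[n _ yn]; apply: yz; exists n.
- move=> z [Dz _]; have [[n _ <-]|yz] := pselect (range y z).
    by rewrite reindex_at.
  by rewrite reindex_out.
- move=> z _; have [[n _ <-]|yz] := pselect (range y z).
    by rewrite !reindex_at // addnK.
  by rewrite !reindex_out.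
- move=> z [_]; have [[n _ <-]|yz] := pselect (range y z).
    by rewrite prefix => /negP; rewrite -leqNgt => kn; rewrite !reindex_at // subnK.
  by rewrite !reindex_out.
have DY_iso : (D `\` y @` `I_k) `&` range y `<=` isolated (D `\` y @` `I_k).
  by move=> z [[_ Yz] /yD zD]; exact: isolated_setD.
split.
- apply: (reindex_continuous (k := k) yI y_cvg) => [n|z [_ /yD]//].
  by rewrite -addnA leq_addr.
- apply: (reindex_continuous (k := k) yI y_cvg _ DY_iso) => n.
  by rewrite addnC -leq_subLR.
Qed.

Section prepend.
Context {T : eqType}.

Definition prepend (s : seq T) (x : nat -> T) (n : nat) : T :=
  if (n < size s)%N then nth (x 0%N) s n else x (n - size s)%N.

Lemma prepend_shift s x n : prepend s x (n + size s) = x n.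
Proof. by rewrite /prepend ltnNge leq_addl addnK. Qed.

Lemma image_prepend s x : prepend s x @` `I_(size s) = [set` s].
Proof.
apply/seteqP; split=> [_ [n ns <-]|z /= zs].
  by rewrite /prepend ns; exact: mem_nth.
exists (index z s); first by rewrite /= index_mem.
by rewrite /prepend index_mem zs nth_index.
Qed.

Lemma range_prepend s x : range (prepend s x) = [set` s] `|` range x.
Proof.
apply/seteqP; split=> [_ [n _ <-]|z [zs|[n _ <-]]].
- rewrite /prepend; case: ltnP => ns; first by left; exact: mem_nth.
  by right; exact: imageT.
- by rewrite -(image_prepend s x) in zs; case: zs => n _ <-; exact: imageT.
- by rewrite -(prepend_shift s); exact: imageT.
Qed.

Lemma prepend_inj s x : uniq s -> injective x -> (forall n, x n \notin s) ->
  injective (prepend s x).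
Proof.
move=> su xI xs m n; rewrite /prepend.
case: ltnP => ms; case: ltnP => ns.
- by move/eqP; rewrite nth_uniq // => /eqP.
- by move=> e; have := xs (n - size s)%N; rewrite -e mem_nth.
- by move=> e; have := xs (m - size s)%N; rewrite e mem_nth.
- by move/xI/(congr1 (addn^~ (size s))); rewrite !subnK.
Qed.

End prepend.

Lemma prepend_cvg {T : ptopologicalType} (s : seq T) x (p : T) :
  x @ \oo --> p -> prepend s x @ \oo --> p.
Proof.
move=> x_cvg; rewrite -(cvg_shiftn (size s)).
suff -> : [sequence prepend s x (n + size s)]_n = x by [].
by apply/funext => n /=; rewrite prepend_shift.
Qed.

Lemma sphere2_bounded (R : realType) : bounded_set (sphere2 R).
Proof.
exists 1; split=> // M M1 v sv; apply: le_trans (ltW M1).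
rewrite [leLHS]mx_normrE; apply: bigmax_le => // -[i j] _ /=.
rewrite -(expr_le1 (ltn0Sn 1)) // real_normK ?num_real // -sv (ord1 i).
by rewrite (bigD1 j) //= lerDl; apply: sumr_ge0 => k _; exact: sqr_ge0.
Qed.

Unset Implicit Arguments.
Theorem lemma3p7 (R : realType) (E F : set 'M[R]_(1, 3)) :
  E `<=` sphere2 R ->
  closed E ->
  totally_disconnected E ->
  ~ finite_set (isolated E) ->
  finite_set F ->
  F `<=` sphere2 R `\` E ->
  homeomorphic_sets (E `|` F) E.
Proof.
move=> ES Ecl _ infI /finite_seqP[s0 ->] FS.
have bE : bounded_set E.
  case: (sphere2_bounded R) => M [Mr sM]; exists M.
  by split=> // N MN v /ES; exact: sM.
have [p /limit_point_injective_cvg[x [xI xiso x_cvg]]] :=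
  compact_infinite_limit_point (bounded_closed_compact bE Ecl) (@isolatedS _ E) infI.
set s := undup s0.
have -> : [set` s0] = [set` s] by apply/seteqP; split=> z; rewrite /= mem_undup.
have sE z : z \in s -> ~ E z by rewrite mem_undup => /FS[].
have xs n : x n \notin s by apply/negP => /sE; apply; exact: isolatedS.
have EsDs : (E `|` [set` s]) `\` [set` s] = E.
  apply/seteqP; split=> [z [[//|zs] /(_ zs)[]]|z Ez].
  by split; [left | move/sE].
rewrite -[X in homeomorphic_sets _ X]EsDs -[X in _ `\` X](image_prepend s x).
apply: homeomorphic_setD_prefix (prepend_cvg s x_cvg) _.
  exact: prepend_inj (undup_uniq _) xI xs.
rewrite range_prepend => z [zs|[n _ <-]].
  rewrite setUC; apply: isolated_setU Ecl (sE z zs).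
  exact: finite_set_isolated (@norm_hausdorff _ _) (finite_seq s) zs.
apply: isolated_setU (xiso n) _ (negP (xs n)).
exact: finite_set_closed (@norm_hausdorff _ _) (finite_seq s).
Qed.
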